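(* Let $\mathbb{P}=\langle \mathit{PF},\Pi\rangle$ be a well-defined ground ProbLog program and let $\mathbb{P}'$ be the $\mathrm{LP}^{\mathrm{MLN}}$ program containing, for each probabilistic fact $pr::a$ in $\mathit{PF}$: the rules $\ln(pr):\ a$ and $\ln(1-pr):\ \bot\leftarrow a$ if $0<pr<1$; the rule $\alpha:\ a$ if $pr=1$; the rule $\alpha:\ \bot\leftarrow a$ if $pr=0$; and containing $\alpha:R$ for each rule $R\in\Pi$. Then $\mathbb{P}$ and $\mathbb{P}'$ have the same probability distribution over all interpretations: $P_{\mathbb{P}}(I)=P_{\mathbb{P}'}(I)$ for every interpretation $I$.
   Context: Interpretations are sets of ground atoms of a signature $\sigma$ with finitely many ground atoms. Ground atoms are divided into probabilistic atoms and derived atoms. A ground ProbLog program $\mathbb{P}=\langle\mathit{PF},\Pi\rangle$ consists of a set $\mathit{PF}$ of probabilistic facts $pr::a$ ($a$ a probabilistic atom, $pr\in[0,1]$ its probability $pr(a)$), and a set $\Pi$ of ground normal rules $A\leftarrow B_1,\dots,B_m,\mathit{not}\ B_{m+1},\dots,\mathit{not}\ B_n$ with $A$ not a probabilistic atom. A total choice $\mathit{TC}$ is a subset of the probabilistic atoms, with probability $\Pr_{\mathbb{P}}(\mathit{TC})=\prod_{a\in\mathit{TC}}pr(a)\cdot\prod_{b\notin \mathit{TC}}(1-pr(b))$ ($b$ ranging over probabilistic atoms). $\mathbb{P}$ is well-defined if for each total choice $\mathit{TC}$, $\Pi\cup\mathit{TC}$ has a total (two-valued) well-founded model. For such $\mathbb{P}$,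 $P_{\mathbb{P}}(I)=\Pr_{\mathbb{P}}(\mathit{TC})$ if there is a total choice $\mathit{TC}$ such that $I$ is the total well-founded model of $\Pi\cup\mathit{TC}$, and $0$ otherwise. A formula is negative if every atom occurrence is in the scope of negation. A rule has the form $A\leftarrow B\wedge N$ ($A$ a possibly empty disjunction of atoms, $B$ a conjunction of atoms, $N$ a negative formula; $\mathit{not}$ is $\neg$). The reduct $\Pi^I$ of a ground program consists of $A\leftarrow B$ for rules with $I\models N$; $I$ is a stable model if it is a minimal model of $\Pi^I$. An $\mathrm{LP}^{\mathrm{MLN}}$ program is a finite set of weighted rules $w:R$ ($w$ real or the symbol $\alpha$); $\Pi_I=\{w:R\mid I\models R\}$; $\mathrm{SM}[\Pi]=\{I\mid I$ stable model of the unweighted $\Pi_I\}$; $W_\Pi(I)=\exp(\sum_{w:R\in\Pi_I}w)$ if $I\in\mathrm{SM}[\Pi]$, else $0$; $P_\Pi(I)=\lim_{\alpha\to\infty}W_\Pi(I)/\sum_{J\in\mathrm{SM}[\Pi]}W_\Pi(J)$. *)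

From HB Require Import structures.
From mathcomp Require Import all_boot all_order all_algebra.
From mathcomp Require Import all_classical all_reals all_analysis.
Set Implicit Arguments. Unset Strict Implicit. Unset Printing Implicit Defensive.
Import Order.TTheory GRing.Theory Num.Theory.
Local Open Scope ring_scope.

(* Ground atoms: a finite type [A]; interpretations: finite sets {set A}. *)

Section Generic.
Variable A : finType.

Definition lfp (F : {set A} -> {set A}) : {set A} :=
  [set a | [forall X : {set A}, (F X \subset X) ==> (a \in X)]].
End Generic.

Section ProbLog.
Variable A : finType.

(* A ground normal rule  h <- B_1,...,B_m, not B_{m+1},...,not B_n
   is represented as (h, {B_1..B_m}, {B_{m+1}..B_n}). *)
Definition nrule := (A * {set A} * {set A})%type.
Definition nhead (r : nrule) : A := r.1.1.
Definition npos (r : nrule) : {set A} := r.1.2.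
Definition nneg (r : nrule) : {set A} := r.2.

Variable Pi : {set nrule}.

(* Immediate consequence operator of the Gelfond-Lifschitz reduct of
   Pi u TC w.r.t. J, applied to X. *)
Definition gl_step (TC J X : {set A}) : {set A} :=
  TC :|: [set nhead r | r in Pi & (npos r \subset X) && [disjoint nneg r & J]].

Definition Gamma (TC J : {set A}) : {set A} := lfp (gl_step TC J).

(* Well-founded model (alternating fixpoint, Van Gelder):
   true atoms = lfp (Gamma o Gamma); the atoms not false = Gamma(true atoms). *)
Definition wf_true (TC : {set A}) : {set A} := lfp (fun X => Gamma TC (Gamma TC X)).
Definition wf_total (TC : {set A}) : bool := Gamma TC (wf_true TC) == wf_true TC.

Variable prob : {set A}.

Definition well_defined : Prop :=
  forall TC : {set A}, TC \subset prob -> wf_total TC.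

Variable R : realType.
Variable pr : A -> R.

Definition Pr_TC (TC : {set A}) : R :=
  (\prod_(a in TC) pr a) * \prod_(b in prob :\: TC) (1 - pr b).

Definition problog_prob (I : {set A}) : R :=
  match [pick TC : {set A} | (TC \subset prob) && wf_total TC && (wf_true TC == I)] with
  | Some TC => Pr_TC TC
  | None => 0
  end.
End ProbLog.

Section LPMLN.
Variable A : finType.

(* A rule  H <- B /\ N  with H a disjunction of atoms (set, possibly empty =
   bottom), B a conjunction of atoms, N = conjunction of negated atoms:
   (H, B, Nset). *)
Definition lrule := ({set A} * {set A} * {set A})%type.
Definition lhead (r : lrule) : {set A} := r.1.1.
Definition lpos (r : lrule) : {set A} := r.1.2.
Definition lneg (r : lrule) : {set A} := r.2.

Definition sat_neg (I : {set A}) (r : lrule) : bool := [disjoint lneg r & I].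
Definition sat_rule (I : {set A}) (r : lrule) : bool :=
  ((lpos r \subset I) && sat_neg I r) ==> ~~ [disjoint lhead r & I].
Definition sat_pos (I : {set A}) (r : lrule) : bool :=
  (lpos r \subset I) ==> ~~ [disjoint lhead r & I].

Definition model_reduct (Q : seq lrule) (I J : {set A}) : bool :=
  all (fun r => sat_neg I r ==> sat_pos J r) Q.

Definition stable (Q : seq lrule) (I : {set A}) : bool :=
  model_reduct Q I I &&
  [forall J : {set A}, (J \proper I) ==> ~~ model_reduct Q I J].

Variable R : realType.
Inductive weight := Soft of R | Hard.
Definition wval (alpha : R) (w : weight) : R :=
  match w with Soft x => x | Hard => alpha end.

Definition wprog := seq (weight * lrule).

Definition sat_part (P : wprog) (I : {set A}) : seq lrule :=
  [seq wr.2 | wr <- P & sat_rule I wr.2].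

Definition SM (P : wprog) (I : {set A}) : bool := stable (sat_part P I) I.

Definition Wt (P : wprog) (alpha : R) (I : {set A}) : R :=
  if SM P I then expR (\sum_(wr <- P | sat_rule I wr.2) wval alpha wr.1) else 0.

(* W_Pi(I) / sum_{J in SM[Pi]} W_Pi(J); P_Pi(I) is its limit as alpha -> oo *)
Definition lpmln_ratio (P : wprog) (alpha : R) (I : {set A}) : R :=
  Wt P alpha I / \sum_(J : {set A} | SM P J) Wt P alpha J.
End LPMLN.

Section Translation.
Variables (A : finType) (R : realType).
Variables (prob : {set A}) (pr : A -> R) (Pi : {set nrule A}).

Definition fact_rule (a : A) : lrule A := ([set a], finset.set0, finset.set0).
Definition constr_rule (a : A) : lrule A := (finset.set0, [set a], finset.set0).

Definition pf_rules (a : A) : wprog A R :=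
  if (0 < pr a) && (pr a < 1) then
    [:: (Soft (ln (pr a)), fact_rule a); (Soft (ln (1 - pr a)), constr_rule a)]
  else if pr a == 1 then [:: (Hard R, fact_rule a)]
  else if pr a == 0 then [:: (Hard R, constr_rule a)]
  else [::].

Definition rule_of_nrule (r : nrule A) : lrule A := ([set nhead r], npos r, nneg r).

Definition translate : wprog A R :=
  flatten [seq pf_rules a | a <- enum prob] ++
  [seq (Hard R, rule_of_nrule r) | r <- enum Pi].
End Translation.

(* For a total choice TC, the well-founded model of Π ∪ TC is total iff it is the unique J with
   Γ_TC(J) = J (Γ_TC(J) being the least model of the reduct (Π ∪ TC)^J), and since no rule head
   is probabilistic such a J determines TC = J ∩ prob.  So P_P(J) = Pr(J ∩ prob) if
   Γ_{J ∩ prob}(J) = J, and 0 otherwise.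
   In LP^MLN, W(J) = e^(α h) e^(-α v(J)) e^(s(J)), with h the number of hard rules, v(J) the
   number of hard rules violated by J and s(J) the soft weight of the rules J satisfies; the ratio
   therefore tends to e^(s(J)), normalised over the stable models violating no hard rule.  For the
   translated program these are exactly the J with Γ_{J ∩ prob}(J) = J that make the
   probability-1 facts true and the probability-0 facts false: Γ is itself a model of the reduct
   and lies below every other one.  For them e^(s(J)) is the product of pr a over a ∈ J ∩ prob and
   of 1 - pr a over a ∈ prob \ J, i.e. Pr(J ∩ prob).  These weights sum to 1, so the
   normalisation disappears in the limit. *)

From HB Require Import structures.
From mathcomp Require Import all_boot all_order all_algebra.
From mathcomp Require Import all_classical all_reals all_analysis.
From mathcomp Require Import ring.
Import Order.TTheory GRing.Theory Num.Theory.
Import numFieldNormedType.Exports.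
(* Re-imported so that the lemmas on finite sets (subsetP, inE, in_setU, ...) shadow their
   classical_sets homonyms. *)
From mathcomp Require Import fintype finset.
Set Implicit Arguments. Unset Strict Implicit. Unset Printing Implicit Defensive.
Local Open Scope ring_scope.

Section LeastFixpoint.
Variable A : finType.
Implicit Types (F : {set A} -> {set A}) (X : {set A}).

Lemma lfp_min F X : F X \subset X -> lfp F \subset X.
Proof. by move=> FX; apply/subsetP => a; rewrite inE => /forall_inP; apply. Qed.

Lemma lfp_closed F : {homo F : X Y / X \subset Y} -> F (lfp F) \subset lfp F.
Proof.
move=> Fmono; apply/subsetP => a Fa; rewrite inE; apply/forall_inP => X FX.
exact: subsetP FX _ (subsetP (Fmono _ _ (lfp_min FX)) _ Fa).
Qed.

End LeastFixpoint.

Section WellFounded.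
Variables (A : finType) (Pi : {set nrule A}).
Implicit Types TC J X : {set A}.

Lemma gl_stepP TC J X a :
  reflect (a \in TC \/ exists2 r, r \in Pi &
             [/\ npos r \subset X, [disjoint nneg r & J] & a = nhead r])
          (a \in gl_step Pi TC J X).
Proof.
rewrite /gl_step in_setU; apply: (iffP orP) => [[|/imsetP[r]] | [|[r rPi [pos neg ->]]]].
- by left.
- by rewrite inE => /andP[rPi /andP[pos neg]] ->; right; exists r.
- by left.
- by right; apply/imsetP; exists r; rewrite // inE rPi pos neg.
Qed.

Lemma gl_step_mono TC J : {homo gl_step Pi TC J : X Y / X \subset Y}.
Proof.
move=> X Y XY; apply/subsetP => a /gl_stepP[aTC | [r rPi [pos neg ->]]]; apply/gl_stepP.
  by left.
by right; exists r => //; split => //; apply: subset_trans XY.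
Qed.

Lemma Gamma_closed TC J : gl_step Pi TC J (Gamma Pi TC J) \subset Gamma Pi TC J.
Proof. exact/lfp_closed/gl_step_mono. Qed.

Lemma Gamma_min TC J X : gl_step Pi TC J X \subset X -> Gamma Pi TC J \subset X.
Proof. exact: lfp_min. Qed.

Lemma sub_Gamma TC J : TC \subset Gamma Pi TC J.
Proof.
by apply/subsetP => a aTC; apply: (subsetP (Gamma_closed TC J)); apply/gl_stepP; left.
Qed.

Lemma Gamma_anti TC J J' : J \subset J' -> Gamma Pi TC J' \subset Gamma Pi TC J.
Proof.
move=> JJ'; apply: Gamma_min; apply: subset_trans (Gamma_closed TC J).
apply/subsetP => a /gl_stepP[aTC | [r rPi [pos neg ->]]]; apply/gl_stepP; first by left.
by right; exists r => //; split => //; apply: disjointWr neg.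
Qed.

Lemma wf_trueE TC J : wf_total Pi TC -> (wf_true Pi TC == J) = (Gamma Pi TC J == J).
Proof.
move=> /eqP Gwf; apply/eqP/eqP => [<- // | GJ].
have wfJ : wf_true Pi TC \subset J by apply: lfp_min; rewrite !GJ.
apply/eqP; rewrite eqEsubset wfJ -{1}Gwf -{1}GJ; exact: Gamma_anti.
Qed.

Definition nmodel J :=
  [forall r in Pi, (npos r \subset J) && [disjoint nneg r & J] ==> (nhead r \in J)].

Lemma Gamma_sub_nmodel TC J : TC \subset J -> nmodel J -> Gamma Pi TC J \subset J.
Proof.
move=> TCJ /forall_inP modJ; apply: Gamma_min; apply/subsetP.
move=> a /gl_stepP[/(subsetP TCJ) // | [r rPi [pos neg ->]]].
by apply: implyP (modJ r rPi) _; rewrite pos neg.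
Qed.

Lemma Gamma_fixed_nmodel TC J : Gamma Pi TC J = J -> nmodel J.
Proof.
move=> GJ; apply/forall_inP => r rPi; apply/implyP => /andP[pos neg].
rewrite -GJ; apply: (subsetP (Gamma_closed TC J)); apply/gl_stepP.
by right; exists r; rewrite ?GJ.
Qed.

Variable prob : {set A}.
Hypothesis head_notin_prob : forall r, r \in Pi -> nhead r \notin prob.

Lemma Gamma_setI TC J : TC \subset prob -> Gamma Pi TC J :&: prob = TC.
Proof.
move=> TCprob; apply/setP => a; rewrite inE.
have /subsetP G : Gamma Pi TC J \subset TC :|: ~: prob.
  apply: Gamma_min; apply/subsetP => b /gl_stepP[bTC | [r rPi [_ _ ->]]].
    by rewrite inE bTC.
  by rewrite !inE head_notin_prob ?orbT.
apply/andP/idP => [[/G + aprob] | aTC]; first by rewrite !inE aprob orbF.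
by rewrite (subsetP (sub_Gamma _ _)) // (subsetP TCprob).
Qed.

End WellFounded.

Section ProbLogDistribution.
Variables (A : finType) (R : realType) (prob : {set A}) (pr : A -> R).
Implicit Types TC J : {set A}.

Definition consistent J :=
  [forall a in prob, ((pr a == 1) ==> (a \in J)) && ((pr a == 0) ==> (a \notin J))].

Lemma Pr_TC_setI J :
  Pr_TC prob pr (J :&: prob) = \prod_(a in prob) (if a \in J then pr a else 1 - pr a).
Proof.
rewrite /Pr_TC [RHS](bigID (mem J)) /=; congr (_ * _); apply: eq_big => a;
  by rewrite !inE; case: (a \in J); case: (a \in prob).
Qed.

Lemma Pr_TC_inconsistent J : ~~ consistent J ->
  \prod_(a in prob) (if a \in J then pr a else 1 - pr a) = 0.
Proof.
case/forall_inPn => a aprob bad; apply/eqP/prodf_eq0; exists a => //.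
by move: bad; case: (a \in J) => /=; rewrite ?implybT ?implybF ?andbT ?negbK // subr_eq0 eq_sym.
Qed.

Lemma sum_Pr_TC : \sum_(TC : {set A} | TC \subset prob) Pr_TC prob pr TC = 1.
Proof.
pose F a := if a \in prob then pr a else 0.
pose G a := if a \in prob then 1 - pr a else 1.
transitivity (\prod_a (F a + G a)); last first.
  by rewrite big1 // => a _; rewrite /F /G; case: ifP; rewrite ?subrKC ?add0r.
rewrite bigA_distr [RHS](bigID (fun TC : {set A} => TC \subset prob)) /=.
rewrite [X in _ = _ + X]big1 ?addr0 => [|TC /subsetPn[a aTC aprob]]; last first.
  by rewrite (bigD1 a) //= aTC /F (negbTE aprob) mul0r.
apply: eq_bigr => TC TCprob; rewrite -{1}(setIidPl TCprob) Pr_TC_setI.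
rewrite [RHS](bigID (mem prob)) /= [X in _ = _ * X]big1 ?mulr1 => [|a aprob].
  by apply: eq_bigr => a aprob; rewrite /F /G aprob.
by rewrite /G (negbTE aprob) (contraNF (subsetP TCprob a) aprob).
Qed.

Variable Pi : {set nrule A}.
Hypothesis head_notin_prob : forall r, r \in Pi -> nhead r \notin prob.
Hypothesis Pi_wd : well_defined Pi prob.

Lemma wf_true_setI TC : TC \subset prob -> wf_true Pi TC :&: prob = TC.
Proof. by move=> TCprob; rewrite -(eqP (Pi_wd TCprob)) Gamma_setI. Qed.

Lemma problog_probE J : problog_prob Pi prob pr J =
  if Gamma Pi (J :&: prob) J == J then Pr_TC prob pr (J :&: prob) else 0.
Proof.
rewrite /problog_prob; case: pickP => [TC /andP[/andP[TCprob wfTC] /eqP wfJ] | none].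
  by rewrite -wfJ wf_true_setI // -(wf_trueE _ wfTC) eqxx.
case: eqP => // GJ; have Jprob := subsetIr J prob.
by have := none (J :&: prob); rewrite Jprob Pi_wd // wf_trueE ?Pi_wd // GJ eqxx.
Qed.

Lemma problog_prob_choices J : problog_prob Pi prob pr J =
  \sum_(TC : {set A} | TC \subset prob) (if wf_true Pi TC == J then Pr_TC prob pr TC else 0).
Proof.
rewrite /problog_prob; case: pickP => [TC0 /andP[/andP[TC0prob _] /eqP wfJ] | none].
  rewrite (bigD1 TC0) //= wfJ eqxx big1 ?addr0 // => TC /andP[TCprob neq].
  case: eqP => // wfTC; case/eqP: neq.
  by rewrite -(wf_true_setI TCprob) -(wf_true_setI TC0prob) wfTC wfJ.
rewrite big1 // => TC TCprob; have := none TC.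
by rewrite TCprob Pi_wd //= => ->.
Qed.

Lemma sum_problog_prob : \sum_(J : {set A}) problog_prob Pi prob pr J = 1.
Proof.
under eq_bigr do rewrite problog_prob_choices.
rewrite exchange_big /= -sum_Pr_TC; apply: eq_bigr => TC _.
by rewrite -big_mkcond /= (big_pred1 (wf_true Pi TC)).
Qed.

End ProbLogDistribution.

Section LPMLNReduct.
Variables (A : finType) (R : realType) (P : wprog A R).
Implicit Types J K : {set A}.

Lemma model_reduct_sat_part J K : model_reduct (sat_part P J) J K =
  all (fun wr => sat_rule J wr.2 ==> sat_neg J wr.2 ==> sat_pos K wr.2) P.
Proof. by rewrite /model_reduct /sat_part all_map all_filter. Qed.

Lemma model_reduct_sat_part_refl J : model_reduct (sat_part P J) J J.
Proof.
rewrite model_reduct_sat_part; elim: P => //= -[w r] Q ->; rewrite andbT /=.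
by rewrite /sat_rule /sat_pos; case: (lpos r \subset J); case: sat_neg; case: [disjoint _ & _].
Qed.

End LPMLNReduct.

Section LPMLNLimit.
Local Open Scope classical_set_scope.
Local Open Scope ring_scope.
Variables (A : finType) (R : realType) (P : wprog A R).
Implicit Types J : {set A}.

Definition hard_count (w : weight R) : nat := if w is Hard then 1 else 0.
Definition soft_value (w : weight R) : R := if w is Soft x then x else 0.

Definition hard_violated J := (\sum_(wr <- P | ~~ sat_rule J wr.2) hard_count wr.1)%N.
Definition soft_weight J := \sum_(wr <- P | sat_rule J wr.2) soft_value wr.1.

Definition lpmln_limit J :=
  if SM P J && (hard_violated J == 0)%N then expR (soft_weight J) else 0.

Definition Wt_rescaled alpha J :=
  if SM P J then expR (soft_weight J) * expR (- alpha) ^+ hard_violated J else 0.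

Lemma Wt_rescale alpha J :
  Wt P alpha J = expR (alpha * (\sum_(wr <- P) hard_count wr.1)%N%:R) * Wt_rescaled alpha J.
Proof.
rewrite /Wt /Wt_rescaled; case: ifP => _; last by rewrite mulr0.
set hard_sat := (\sum_(wr <- P | sat_rule J wr.2) hard_count wr.1)%N.
have -> : (\sum_(wr <- P) hard_count wr.1 = hard_sat + hard_violated J)%N.
  exact: bigID.
have -> : \sum_(wr <- P | sat_rule J wr.2) wval alpha wr.1 = alpha * hard_sat%:R + soft_weight J.
  rewrite /hard_sat /soft_weight natr_sum mulr_sumr -big_split /=.
  by apply: eq_bigr => -[[x|] r] _ /=; rewrite ?mulr0 ?add0r ?mulr1 ?addr0.
rewrite natrD -expRM_natl -!expRD; congr expR; ring.
Qed.

Lemma lpmln_ratio_rescaled alpha I :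
  lpmln_ratio P alpha I = Wt_rescaled alpha I / \sum_(J | SM P J) Wt_rescaled alpha J.
Proof.
rewrite /lpmln_ratio Wt_rescale; under [X in _ / X]eq_bigr do rewrite Wt_rescale.
by rewrite -mulr_sumr invfM mulrACA divff ?mul1r // expR_eq0.
Qed.

Lemma Wt_rescaled_cvg J : Wt_rescaled alpha J @[alpha --> +oo] --> lpmln_limit J.
Proof.
rewrite /Wt_rescaled /lpmln_limit; case: (SM P J) => /=; last exact: cvg_cst.
have -> : (if hard_violated J == 0 then expR (soft_weight J) else 0) =
          expR (soft_weight J) * 0 ^+ hard_violated J.
  by case: (hard_violated J) => [|n]; rewrite ?expr0 ?mulr1 ?expr0n ?mulr0.
apply: cvgM; first exact: cvg_cst.
apply: (@continuous_cvg _ _ _ _ _ (fun x => expR (- x)) (fun y => y ^+ hard_violated J)).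
  exact: exprn_continuous.
exact: cvgr_expR.
Qed.

Lemma lpmln_ratio_cvg I : \sum_J lpmln_limit J != 0 ->
  lpmln_ratio P alpha I @[alpha --> +oo] --> lpmln_limit I / \sum_J lpmln_limit J.
Proof.
move=> sum_neq0; have sumSM : \sum_(J | SM P J) lpmln_limit J = \sum_J lpmln_limit J.
  rewrite [RHS](bigID (SM P)) /= [X in _ = _ + X]big1 ?addr0 // => J /negbTE.
  by rewrite /lpmln_limit => ->.
under eq_fun do rewrite lpmln_ratio_rescaled.
apply: cvgM; first exact: Wt_rescaled_cvg.
rewrite -sumSM; apply: cvgV; first by rewrite sumSM.
apply: cvg_big => [|J _]; [exact: add_continuous | exact: Wt_rescaled_cvg].
Qed.

End LPMLNLimit.

Section RuleSatisfaction.
Variable A : finType.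
Implicit Types (J K : {set A}) (a : A) (r : nrule A).

Lemma disjoint_set0 J : [disjoint set0 & J].
Proof. by rewrite -setI_eq0 set0I. Qed.

Lemma sat_rule_fact J a : sat_rule J (fact_rule a) = (a \in J).
Proof.
by rewrite /sat_rule /sat_neg /lpos /lneg /lhead /= sub0set disjoint_set0 disjoints1 negbK.
Qed.

Lemma sat_pos_fact K a : sat_pos K (fact_rule a) = (a \in K).
Proof. by rewrite /sat_pos /lpos /lhead /= sub0set disjoints1 negbK. Qed.

Lemma sat_neg_fact J a : sat_neg J (fact_rule a).
Proof. exact: disjoint_set0. Qed.

Lemma sat_rule_constr J a : sat_rule J (constr_rule a) = (a \notin J).
Proof. by rewrite /sat_rule /sat_neg /lpos /lneg /lhead /= sub1set disjoint_set0 andbT. Qed.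

Lemma sat_pos_constr K a : sat_pos K (constr_rule a) = (a \notin K).
Proof. by rewrite /sat_pos /lpos /lhead /= sub1set disjoint_set0. Qed.

Lemma sat_neg_constr J a : sat_neg J (constr_rule a).
Proof. exact: disjoint_set0. Qed.

Lemma sat_rule_nrule J r : sat_rule J (rule_of_nrule r) =
  (npos r \subset J) && [disjoint nneg r & J] ==> (nhead r \in J).
Proof. by rewrite /sat_rule /sat_neg /lpos /lneg /lhead /= disjoints1 negbK. Qed.

Lemma sat_pos_nrule K r : sat_pos K (rule_of_nrule r) = (npos r \subset K) ==> (nhead r \in K).
Proof. by rewrite /sat_pos /lpos /lhead /= disjoints1 negbK. Qed.

End RuleSatisfaction.

Section Translation.
Variables (A : finType) (R : realType) (prob : {set A}) (pr : A -> R) (Pi : {set nrule A}).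
Hypothesis pr_range : forall a, a \in prob -> 0 <= pr a <= 1.
Implicit Types (J K : {set A}) (a : A).
Local Notation P' := (translate prob pr Pi).

Variant pf_rules_spec a : wprog A R -> Type :=
| PfRulesSoft of 0 < pr a < 1 : pf_rules_spec a
    [:: (Soft (ln (pr a)), fact_rule a); (Soft (ln (1 - pr a)), constr_rule a)]
| PfRulesTrue of pr a = 1 : pf_rules_spec a [:: (Hard R, fact_rule a)]
| PfRulesFalse of pr a = 0 : pf_rules_spec a [:: (Hard R, constr_rule a)].

Lemma pf_rulesP a : a \in prob -> pf_rules_spec a (pf_rules pr a).
Proof.
move=> /pr_range /andP[pr_ge0 pr_le1]; rewrite /pf_rules.
case: ifP => [/andP[pr_gt0 pr_lt1] | pr_not_open]; first by constructor; rewrite pr_gt0.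
case: eqP => [pr1 | pr_neq1]; first by constructor.
case: eqP => [pr0 | pr_neq0]; first by constructor.
move: pr_not_open; rewrite !lt_neqAle pr_ge0 pr_le1 eq_sym.
by rewrite (introN eqP pr_neq0) (introN eqP pr_neq1).
Qed.

Lemma pf_rules_reduct a J K : a \in prob ->
  all (fun wr => sat_rule J wr.2 ==> sat_neg J wr.2 ==> sat_pos K wr.2) (pf_rules pr a) =
  ((0 < pr a) && (a \in J) ==> (a \in K)) && ((pr a < 1) && (a \notin J) ==> (a \notin K)).
Proof.
case/pf_rulesP => [/andP[-> ->] | -> | ->] /=;
  by rewrite ?sat_rule_fact ?sat_neg_fact ?sat_pos_fact ?sat_rule_constr ?sat_neg_constr
             ?sat_pos_constr ?ltr01 ?ltxx ?andbT.
Qed.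

Lemma pf_rules_hard a J : a \in prob ->
  all (fun wr => ~~ sat_rule J wr.2 ==> (hard_count wr.1 == 0)%N) (pf_rules pr a) =
  ((pr a == 1) ==> (a \in J)) && ((pr a == 0) ==> (a \notin J)).
Proof.
case/pf_rulesP => [/andP[pr_gt0 pr_lt1] | -> | ->] /=.
- by rewrite !implybT (gt_eqF pr_gt0) (lt_eqF pr_lt1).
- by rewrite sat_rule_fact eqxx /= (oner_eq0 R) implybF negbK !andbT.
- by rewrite sat_rule_constr eqxx /= (eq_sym 0 1) (oner_eq0 R) implybF negbK !andbT.
Qed.

Lemma pf_rules_soft a J : a \in prob ->
  ((pr a == 1) ==> (a \in J)) && ((pr a == 0) ==> (a \notin J)) ->
  expR (\sum_(wr <- pf_rules pr a | sat_rule J wr.2) soft_value wr.1) =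
  if a \in J then pr a else 1 - pr a.
Proof.
case/pf_rulesP => [/andP[pr_gt0 pr_lt1] | pr1 | pr0] sure; rewrite !big_cons big_nil /=.
- rewrite sat_rule_fact sat_rule_constr; case: (a \in J) => /=.
    by rewrite addr0 lnK // posrE.
  by rewrite addr0 lnK // posrE subr_gt0.
- rewrite sat_rule_fact; move: sure; rewrite pr1 eqxx (oner_eq0 R) andbT /= => ->.
  by rewrite addr0 expR0.
- rewrite sat_rule_constr; move: sure; rewrite pr0 eqxx (eq_sym 0 1) (oner_eq0 R) /= => /negbTE->.
  by rewrite addr0 expR0 subr0.
Qed.

Lemma big_translate (T : Type) (idx : T) (op : Monoid.com_law idx) (F : weight R * lrule A -> T) :
  \big[op/idx]_(wr <- P') F wr =
  op (\big[op/idx]_(a in prob) \big[op/idx]_(wr <- pf_rules pr a) F wr)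
     (\big[op/idx]_(r in Pi) F (Hard R, rule_of_nrule r)).
Proof. by rewrite /translate big_cat big_flatten !big_map !big_enum. Qed.

Lemma all_translate (p : pred (weight R * lrule A)) :
  all p P' = [forall a in prob, all p (pf_rules pr a)] &&
             [forall r in Pi, p (Hard R, rule_of_nrule r)].
Proof.
rewrite -big_all big_translate -!big_andE; congr andb.
by apply: eq_bigr => a _; rewrite big_all.
Qed.

Lemma nmodel_sat_rule J : nmodel Pi J = [forall r in Pi, sat_rule J (rule_of_nrule r)].
Proof. by apply: eq_forallb_in => r _; rewrite sat_rule_nrule. Qed.

Lemma hard_violated_translate J :
  (hard_violated P' J == 0)%N = consistent prob pr J && nmodel Pi J.
Proof.
rewrite sum_nat_seq_eq0 all_translate nmodel_sat_rule; congr andb.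
  by apply: eq_forallb_in => a; apply: pf_rules_hard.
by apply: eq_forallb_in => r _ /=; rewrite implybF negbK.
Qed.

Lemma soft_weight_translate J : consistent prob pr J ->
  expR (soft_weight P' J) = \prod_(a in prob) (if a \in J then pr a else 1 - pr a).
Proof.
move=> /forall_inP sure; rewrite /soft_weight big_mkcond big_translate /=.
rewrite [X in _ + X]big1 ?addr0 => [|r _]; last by case: ifP.
rewrite expR_sum; apply: eq_bigr => a aprob.
by rewrite -big_mkcond pf_rules_soft ?sure.
Qed.

Lemma model_reduct_translate J K : nmodel Pi J ->
  model_reduct (sat_part P' J) J K =
  [forall a in prob, ((0 < pr a) && (a \in J) ==> (a \in K)) &&
                     ((pr a < 1) && (a \notin J) ==> (a \notin K))] &&
  [forall r in Pi, [disjoint nneg r & J] ==> (npos r \subset K) ==> (nhead r \in K)].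
Proof.
rewrite nmodel_sat_rule => /forall_inP J_sat.
rewrite model_reduct_sat_part all_translate; congr andb.
  by apply: eq_forallb_in => a; apply: pf_rules_reduct.
by apply: eq_forallb_in => r /J_sat /= ->; rewrite sat_pos_nrule.
Qed.

Lemma Gamma_model_reduct J : nmodel Pi J ->
  model_reduct (sat_part P' J) J (Gamma Pi (J :&: prob) J).
Proof.
move=> J_model; have GJ := Gamma_sub_nmodel (subsetIl J prob) J_model.
rewrite model_reduct_translate //; apply/andP; split; apply/forall_inP.
  move=> a aprob; apply/andP; split; apply/implyP => /andP[_ aJ].
    by apply: (subsetP (sub_Gamma _ _ _)); rewrite inE aJ aprob.
  by apply: contra aJ; apply: (subsetP GJ).
move=> r rPi; apply/implyP => neg; apply/implyP => pos.
by apply: (subsetP (Gamma_closed _ _ _)); apply/gl_stepP; right; exists r.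
Qed.

Lemma Gamma_sub_model_reduct J K : consistent prob pr J -> nmodel Pi J ->
  model_reduct (sat_part P' J) J K -> Gamma Pi (J :&: prob) J \subset K.
Proof.
move=> /forall_inP sure J_model; rewrite model_reduct_translate //.
case/andP => /forall_inP K_facts /forall_inP K_rules; apply: Gamma_min.
apply/subsetP => a /gl_stepP[/setIP[aJ aprob] | [r rPi [pos neg ->]]].
  have pr_gt0 : 0 < pr a.
    have := sure a aprob; rewrite aJ /= implybT implybF andTb lt_def => -> /=.
    by case/andP: (pr_range aprob).
  by have := K_facts a aprob; rewrite pr_gt0 aJ => /andP[].
by have := K_rules r rPi; rewrite neg pos.
Qed.

Lemma translate_full J : SM P' J && (hard_violated P' J == 0)%N =
  (Gamma Pi (J :&: prob) J == J) && consistent prob pr J.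
Proof.
rewrite hard_violated_translate.
apply/idP/idP => [/and3P[SMJ sure J_model] | /andP[/eqP GJ sure]].
  have GJ := Gamma_sub_nmodel (subsetIl J prob) J_model.
  rewrite sure andbT eqEsubset GJ /=; apply: contraT => not_JG.
  case/andP: SMJ => _ /forallP/(_ (Gamma Pi (J :&: prob) J)).
  by rewrite properE GJ not_JG Gamma_model_reduct.
have J_model := Gamma_fixed_nmodel GJ.
rewrite sure J_model /SM /stable model_reduct_sat_part_refl /= andbT.
apply/forallP => K; apply/implyP => K_proper; apply/negP => K_model.
have := Gamma_sub_model_reduct sure J_model K_model; rewrite GJ => JK.
by rewrite properE JK andbF in K_proper.
Qed.

Hypothesis head_notin_prob : forall r, r \in Pi -> nhead r \notin prob.
Hypothesis Pi_wd : well_defined Pi prob.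

Lemma translate_limit J : lpmln_limit P' J = problog_prob Pi prob pr J.
Proof.
rewrite problog_probE // /lpmln_limit translate_full Pr_TC_setI.
case: eqP => //= _; case: ifP => [sure | /negbT unsure].
  exact: soft_weight_translate.
by rewrite Pr_TC_inconsistent.
Qed.

End Translation.

Local Open Scope classical_set_scope.
Local Open Scope ring_scope.

Theorem theorem4 (R : realType) (A : finType) (prob : {set A}) (pr : A -> R)
    (Pi : {set nrule A})
    (Hpr : forall a, a \in prob -> 0 <= pr a <= 1)
    (Hhead : forall r, r \in Pi -> nhead r \notin prob)
    (Hwd : well_defined Pi prob)
    (I : {set A}) :
  lpmln_ratio (translate prob pr Pi) alpha I @[alpha --> +oo]
    --> problog_prob Pi prob pr I.
Proof.
have limitE := translate_limit Hpr Hhead Hwd.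
have sum1 : \sum_(J : {set A}) lpmln_limit (translate prob pr Pi) J = 1.
  by under eq_bigr do rewrite limitE; exact: sum_problog_prob.
have := @lpmln_ratio_cvg _ _ (translate prob pr Pi) I.
by rewrite sum1 divr1 limitE; apply; exact: oner_neq0.
Qed.
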